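(* If $\sum_ir_ix_i\le f\le\sum_js_jy_j$ for positive simple functions $\sum_ir_ix_i$, $\sum_js_jy_j$ and $f\in R$, then $\sum_ir_ix_i\le\sum_js_jy_j$.
   Context: $R$ is a Riesz space over $\mathbb{Q}$ with strong unit $1$; rationals $r$ are identified with $r\cdot1$. $\mathrm{Spec}(R)$ is the distributive lattice generated by $D(a)$, $a\in R$, subject to $D(1)=1$; $D(a)\wedge D(-a)=0$; $D(a+b)\le D(a)\vee D(b)$; $D(a)=0$ if $a\le0$; $D(a\vee b)=D(a)\vee D(b)$. $B$ is the Boolean algebra freely generated by $\mathrm{Spec}(R)$; $(f>r):=D(f-r)$, $(f<r):=D(r-f)$, $(f\le r):=\neg(f>r)$, $(f\ge r):=\neg(f<r)$. A positive simple function is a formal finite sum $\sum_i r_ix_i$ with rationals $r_i\ge0$, $x_i\in B$; for a finite index set $I$, $x_I:=\bigwedge_{i\in I}x_i$ ($x_\emptyset=1$), $r_I:=\sum_{i\in I}r_i$ ($r_\emptyset=0$). Orders: $\sum_ir_ix_i\le\sum_js_jy_j$ iff for every finite index set $I$, $x_I\le\bigvee\{y_J: J \text{ finite index set with } r_I\le s_J\}$; $\sum_ir_ix_i\le f$ iff $x_I\le(f\ge r_I)$ for every finite $I$; $f\le\sum_js_jy_j$ iff $1=\bigvee_J((f\le s_J)\wedge y_J)$ over all finite index sets $J$. *)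

From HB Require Import structures.
From mathcomp Require Import all_boot all_order all_algebra.
Set Implicit Arguments. Unset Strict Implicit. Unset Printing Implicit Defensive.
Import Order.TTheory GRing.Theory Num.Theory.

Local Open Scope ring_scope.

(*   one    : the strong unit 1.  Rationals r are identified with r*:1 *)
Record riesz_axioms (V : lmodType rat) (le : rel V) (vmax : V -> V -> V)
    (one : V) : Prop := RieszAxioms {
  rz_refl  : forall a, le a a;
  rz_trans : forall a b c, le a b -> le b c -> le a c;
  rz_anti  : forall a b, le a b -> le b a -> a = b;
  rz_add   : forall a b c, le a b -> le (a + c) (b + c);
  rz_scale : forall (q : rat) a b, 0 <= q -> le a b -> le (q *: a) (q *: b);
  rz_max_l : forall a b, le a (vmax a b);
  rz_max_r : forall a b, le b (vmax a b);
  rz_max_lub : forall a b c, le a c -> le b c -> le (vmax a b) c;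
  rz_unit_pos : le 0 one;
  rz_strong_unit : forall a, exists n : nat,
      le a (n%:R *: one) /\ le (- (n%:R *: one)) a
}.

(* Syntax of elements of B: Boolean combinations of generators D(a). *)
Inductive bterm (V : Type) : Type :=
| BD of V
| BTop | BBot
| BMeet of bterm V & bterm V
| BJoin of bterm V & bterm V
| BNeg of bterm V.
Arguments BTop {V}. Arguments BBot {V}.

Fixpoint interp (V : Type) (d : Order.disp_t) (L : ctbDistrLatticeType d)
    (D : V -> L) (t : bterm V) : L :=
  match t with
  | BD a => D a
  | BTop => Order.top
  | BBot => Order.bottom
  | BMeet t1 t2 => Order.meet (interp D t1) (interp D t2)
  | BJoin t1 t2 => Order.join (interp D t1) (interp D t2)
  | BNeg t1 => Order.compl (interp D t1)
  end.

Definition spec_rel (V : lmodType rat) (le : rel V) (vmax : V -> V -> V)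
    (one : V) (d : Order.disp_t) (L : ctbDistrLatticeType d) (D : V -> L) : Prop :=
  [/\ D one = Order.top,
      forall a, Order.meet (D a) (D (- a)) = Order.bottom,
      forall a b, (D (a + b) <= Order.join (D a) (D b))%O,
      forall a, le a 0 -> D a = Order.bottom
    & forall a b, D (vmax a b) = Order.join (D a) (D b)].

(* Order of B, the Boolean algebra freely generated by Spec(R)
   (equivalently: presented by generators D(a) and the relations of Spec(R)):
   x <= y in B iff it holds under every interpretation satisfying the
   relations (the free algebra is itself such an interpretation). *)
Definition Ble (V : lmodType rat) (le : rel V) (vmax : V -> V -> V) (one : V)
    (x y : bterm V) : Prop :=
  forall (d : Order.disp_t) (L : ctbDistrLatticeType d) (D : V -> L),
    spec_rel le vmax one D -> (interp D x <= interp D y)%O.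

Definition Beq (V : lmodType rat) (le : rel V) (vmax : V -> V -> V) (one : V)
    (x y : bterm V) : Prop :=
  Ble le vmax one x y /\ Ble le vmax one y x.

Section Simple.
Variables (V : lmodType rat) (one : V).

Definition gtB (f : V) (r : rat) : bterm V := BD (f - r *: one).
Definition ltB (f : V) (r : rat) : bterm V := BD (r *: one - f).
Definition leB (f : V) (r : rat) : bterm V := BNeg (gtB f r).
Definition geB (f : V) (r : rat) : bterm V := BNeg (ltB f r).

Definition bigMeet (s : seq (bterm V)) : bterm V := foldr (@BMeet V) BTop s.
Definition bigJoin (s : seq (bterm V)) : bterm V := foldr (@BJoin V) BBot s.

(* A positive simple function sum_i r_i x_i is given by n, r, x with
   index set 'I_n;  x_I and r_I for I a (finite) set of indices. *)
Definition xI n (x : 'I_n -> bterm V) (I : {set 'I_n}) : bterm V :=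
  bigMeet [seq x i | i <- enum I].
Definition rI n (r : 'I_n -> rat) (I : {set 'I_n}) : rat :=
  \sum_(i in I) r i.
End Simple.

(* sum_i r_i x_i <= sum_j s_j y_j *)
Definition simple_le (V : lmodType rat) (le : rel V) (vmax : V -> V -> V)
    (one : V) n (r : 'I_n -> rat) (x : 'I_n -> bterm V)
    m (s : 'I_m -> rat) (y : 'I_m -> bterm V) : Prop :=
  forall I : {set 'I_n},
    Ble le vmax one (xI x I)
      (bigJoin [seq xI y J | J <- enum [set: {set 'I_m}] & rI r I <= rI s J]).

(* sum_i r_i x_i <= f *)
Definition simple_le_elt (V : lmodType rat) (le : rel V) (vmax : V -> V -> V)
    (one : V) n (r : 'I_n -> rat) (x : 'I_n -> bterm V) (f : V) : Prop :=
  forall I : {set 'I_n}, Ble le vmax one (xI x I) (geB one f (rI r I)).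

(* f <= sum_j s_j y_j *)
Definition elt_le_simple (V : lmodType rat) (le : rel V) (vmax : V -> V -> V)
    (one : V) (f : V) m (s : 'I_m -> rat) (y : 'I_m -> bterm V) : Prop :=
  Beq le vmax one BTop
    (bigJoin [seq BMeet (leB one f (rI s J)) (xI y J)
             | J <- enum [set: {set 'I_m}]]).

From HB Require Import structures.
From mathcomp Require Import all_boot all_order all_algebra.
Import Order.TTheory GRing.Theory Num.Theory.
Set Implicit Arguments. Unset Strict Implicit. Unset Printing Implicit Defensive.
Local Open Scope ring_scope.

(** It suffices to check the inequality in every Boolean algebra [L] carrying
    a model [D] of the relations of Spec(R).  There [x_I <= (f >= r_I)] and
    [1 = \/_J ((f <= s_J) /\ y_J)] give
    [x_I = \/_J (x_I /\ (f >= r_I) /\ (f <= s_J) /\ y_J)].  A term with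
    [s_J < r_I] vanishes, because [D(r_I - f) \/ D(f - s_J) >= D(r_I - s_J)]
    and [D] is [1] at every positive rational (the unit is strong and Q is
    archimedean).  Every other term lies below [y_J] with [r_I <= s_J].
    The positivity of the coefficients [r_i], [s_j] plays no role. *)

Lemma meet_joins_le (d : Order.disp_t) (L : bDistrLatticeType d)
    (T : eqType) (r : seq T) (F : T -> L) (a u : L) :
  (forall t, t \in r -> a `&` F t <= u)%O ->
  (a `&` \join_(t <- r) F t <= u)%O.
Proof.
elim: r => [|t r IHr] aFu; first by rewrite big_nil meetx0 le0x.
rewrite big_cons meetUr leUx aFu ?mem_head //=.
by apply: IHr => t' rt'; apply: aFu; rewrite in_cons rt' orbT.
Qed.

Lemma interp_bigJoin (V : lmodType rat) (d : Order.disp_t) (L : ctbDistrLatticeType d)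
    (D : V -> L) (s : seq (bterm V)) :
  interp D (bigJoin s) = (\join_(t <- s) interp D t)%O.
Proof. by elim: s => [|t s IHs] /=; rewrite ?big_nil ?big_cons ?IHs. Qed.

Section SpecModel.

Variables (V : lmodType rat) (le : rel V) (vmax : V -> V -> V) (one : V).
Hypothesis HR : riesz_axioms le vmax one.
Variables (d : Order.disp_t) (L : ctbDistrLatticeType d) (D : V -> L).
Hypothesis HD : spec_rel le vmax one D.

Lemma spec_D_add (a b : V) : (D (a + b) <= D a `|` D b)%O.
Proof. by case: HD. Qed.

Lemma spec_D_addr_nonpos (a b : V) : le b 0 -> (D (a + b) <= D a)%O.
Proof.
case: HD => _ _ _ D_nonpos _ b_le0.
by rewrite -[D a]joinx0 -(D_nonpos b b_le0) spec_D_add.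
Qed.

Lemma spec_D_muln (a : V) (k : nat) : (D (a *+ k.+1) <= D a)%O.
Proof.
elim: k => [|k IHk]; first by rewrite mulr1n.
by rewrite mulrS (le_trans (spec_D_add _ _)) // leUx lexx IHk.
Qed.

Lemma riesz_opp_scale_unit_le0 (q : rat) : 0 <= q -> le (- (q *: one)) 0.
Proof.
move=> q_ge0; have := rz_add HR (- (q *: one)) (rz_scale HR q_ge0 (rz_unit_pos HR)).
by rewrite scaler0 add0r subrr.
Qed.

Lemma spec_D_scale_unit_ge1 (c : rat) : 1 <= c -> D (c *: one) = \top%O.
Proof.
move=> c_ge1; apply/eqP; rewrite eq_le lex1.
case: HD => <- _ _ _ _.
rewrite {1}(_ : one = c *: one + - ((c - 1) *: one)); last first.
  by rewrite scalerBl scale1r opprB addrC subrK.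
by apply: spec_D_addr_nonpos; rewrite riesz_opp_scale_unit_le0 // subr_ge0.
Qed.

Lemma spec_D_scale_unit_gt0 (q : rat) : 0 < q -> D (q *: one) = \top%O.
Proof.
move=> q_gt0; set k := Num.Def.archi_bound q^-1.
have k_q_ge1 : 1 <= k.+1%:R * q.
  rewrite -(@ler_pM2r _ q^-1) ?invr_gt0 // mul1r -mulrA divff ?gt_eqF // mulr1.
  apply: ltW; apply: (lt_le_trans (archi_boundP _)); last by rewrite ler_nat.
  by rewrite invr_ge0 ltW.
apply/eqP; rewrite eq_le lex1 -(spec_D_scale_unit_ge1 k_q_ge1).
by rewrite -scalerA scaler_nat spec_D_muln.
Qed.

Lemma spec_D_levels_cover (f : V) (r s : rat) :
  s < r -> (D (r *: one - f) `|` D (f - s *: one))%O = \top%O.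
Proof.
move=> s_lt_r; apply/eqP; rewrite eq_le lex1.
rewrite -(@spec_D_scale_unit_gt0 (r - s)) ?subr_gt0 //.
have -> : (r - s) *: one = (r *: one - f) + (f - s *: one).
  by rewrite scalerBl addrA subrK.
exact: spec_D_add.
Qed.

Lemma spec_levels_disjoint (f : V) (r s : rat) :
  s < r -> (~` D (r *: one - f) `&` ~` D (f - s *: one))%O = \bot%O.
Proof.
move=> s_lt_r; rewrite -Order.CTBDistrLatticeTheory.complU.
by rewrite spec_D_levels_cover // Order.CTBDistrLatticeTheory.compl1.
Qed.

Lemma spec_le_of_levels (f : V) (a : L) (rho : rat)
    (T : eqType) (ts : seq T) (sigma : T -> rat) (z : T -> L) :
  (a <= ~` D (rho *: one - f))%O ->
  (\top <= \join_(t <- ts) (~` D (f - sigma t *: one) `&` z t))%O ->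
  (a <= \join_(t <- ts | rho <= sigma t) z t)%O.
Proof.
move=> a_le_geq cover; rewrite -[a]meetx1.
apply: le_trans (leI2 (lexx a) cover) _; apply: meet_joins_le => t ts_t.
have [rho_le | sigma_lt] := leP rho (sigma t).
  by rewrite meetA leIx2 // (joins_sup_seq _ ts_t) ?orbT.
rewrite meetA leIx2 // (le_trans (leI2 a_le_geq (lexx _))) //.
by rewrite spec_levels_disjoint // le0x.
Qed.

End SpecModel.

Theorem lemma4p7 (V : lmodType rat) (le : rel V) (vmax : V -> V -> V) (one : V)
    (HR : riesz_axioms le vmax one)
    (n : nat) (r : 'I_n -> rat) (x : 'I_n -> bterm V)
    (m : nat) (s : 'I_m -> rat) (y : 'I_m -> bterm V) (f : V)
    (hr : forall i, 0 <= r i) (hs : forall j, 0 <= s j)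
    (H1 : simple_le_elt le vmax one r x f)
    (H2 : elt_le_simple le vmax one f s y) :
  simple_le le vmax one r x s y.
Proof.
move=> I d L D HD.
have cover := proj1 H2 d L D HD; rewrite interp_bigJoin big_map /= in cover.
rewrite interp_bigJoin big_map big_filter.
exact: (spec_le_of_levels HR HD (H1 I d L D HD)) cover.
Qed.
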